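(* Consider an axially symmetric magnetized star and its surroundings in a steady state, described in an inertial frame with spherical polar coordinates $(r,\theta,\phi)$ (rotation axis $\theta=0$) by ideal magnetohydrodynamics, and consisting of a magnetic rotator flow region and a disk region separated by a shock boundary $\Sigma_{shock}$. Let $Q$ be any point on $\Sigma_{shock}$. Suppose that there is no meridional motion in the disk region, i.e. the disk velocity is $\hat{\mathbf{v}}=\hat v_\phi\,\mathbf e_\phi$, and that the normal component $\hat B_{n,Q}$ of the magnetic field in the disk region at $Q$ is not zero. Let $\hat Q$ be the point of the disk region adjacent to $Q$ on the magnetic field line through $Q$. Then the angular velocity of the disk region at $\hat Q$ (that is, $\hat v_\phi/(r\sin\theta)$ there) is equal to the angular velocity $\omega$ at the point $P_\star$ of the stellar photosphere at which the magnetic field line through $Q$ is anchored. Furthermore, if the system is equatorially symmetric and the magnetic field line through $Q$ is continuous across the disk, then the angular velocity at all points of the disk region along this field line is the same as that at $P_\star$, for time periods over which the disk region remains steady.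
   Context: Vectors are decomposed into meridional and azimuthal parts, $\mathbf v=\mathbf v_m+v_\phi\mathbf e_\phi$, $\mathbf B=\mathbf B_m+B_\phi\mathbf e_\phi$, where $\mathbf e_r,\mathbf e_\theta,\mathbf e_\phi$ are the unit coordinate vectors. All quantities are independent of $\phi$ (axial symmetry) and of time (steady state). In each region the material is a perfectly conducting fluid satisfying $\mathrm{div}(\rho\mathbf v)=0$, $\mathrm{div}\,\mathbf B=0$ and the steady induction equation $\mathrm{curl}(\mathbf v\times\mathbf B)=\mathbf 0$. In the flow region these imply $\mathbf v_m=\chi\mathbf B_m$ for a scalar function $\chi$ (meridional streamlines coincide with meridional field lines) and $\mathbf v=\chi\mathbf B+\omega\,r\sin\theta\,\mathbf e_\phi$, where $\omega$ is constant along each meridional field line; $\omega$ is the angular velocity of that field line, equal to the angular velocity of the star at the photospheric point $P_\star$ where the field line is anchored. Across the shock surface $\Sigma_{shock}$, with unit normal $\mathbf n$ pointing from the flow region into the disk and unit meridional tangent $\mathbf t=\mathbf n\times\mathbf e_\phi$, the jump conditions hold: the normal magnetic field is continuous, $\Delta[B_n]=0$, and the tangential electric field is continuous, $\Delta[(\mathbf v\times\mathbf B)\cdot\mathbf t]=0$, where $\Delta[\cdot]$ denotes the change across the shock and hatted quantities refer to the disk side. *)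

From Stdlib Require Import Reals.
From Coquelicot Require Import Coquelicot.
Open Scope R_scope.

(* A vector given by its components in the local orthonormal spherical frame
   (e_r, e_theta, e_phi), which is right-handed: e_r x e_theta = e_phi. *)
Record vec := mkv { vr : R; vth : R; vph : R }.

Definition ephi : vec := mkv 0 0 1.
Definition vadd (a b : vec) : vec := mkv (vr a + vr b) (vth a + vth b) (vph a + vph b).
Definition vscale (k : R) (a : vec) : vec := mkv (k * vr a) (k * vth a) (k * vph a).
Definition dot (a b : vec) : R := vr a * vr b + vth a * vth b + vph a * vph b.
Definition cross (a b : vec) : vec :=
  mkv (vth a * vph b - vph a * vth b)
      (vph a * vr b - vr a * vph b)
      (vr a * vth b - vth a * vr b).

Definition Rcyl (r th : R) : R := r * sin th.

(* Axisymmetric (phi-independent) vector fields are functions of (r, theta).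
   Curl and divergence in spherical polar coordinates, with all d/dphi = 0. *)
Definition curl_sph (E : R -> R -> vec) (r th : R) : vec :=
  mkv (Derive (fun t => sin t * vph (E r t)) th / (r * sin th))
      (- Derive (fun s => s * vph (E s th)) r / r)
      ((Derive (fun s => s * vth (E s th)) r - Derive (fun t => vr (E r t)) th) / r).

Definition div_sph (B : R -> R -> vec) (r th : R) : R :=
  Derive (fun s => s ^ 2 * vr (B s th)) r / r ^ 2
  + Derive (fun t => sin t * vth (B r t)) th / (r * sin th).

Definition open2 (D : R -> R -> Prop) : Prop :=
  forall r th, D r th -> exists delta, 0 < delta /\
    forall r' th', Rabs (r' - r) < delta -> Rabs (th' - th) < delta -> D r' th'.

Definition diff2 (f : R -> R -> R) (r th : R) : Prop :=
  exists lx ly, differentiable_pt_lim f r th lx ly.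

(* f(r0,th0) is the limit of f(r,th) as (r,th) -> (r0,th0) within D
   (used to say: disk-side values at the shock are the limits from the disk) *)
Definition cont_within_at (D : R -> R -> Prop) (f : R -> R -> R) (r0 th0 : R) : Prop :=
  forall eps, 0 < eps -> exists delta, 0 < delta /\
    forall r th, D r th -> Rabs (r - r0) < delta -> Rabs (th - th0) < delta ->
      Rabs (f r th - f r0 th0) < eps.

Definition cont_on (f : R -> R) (a b : R) : Prop :=
  forall s, a <= s <= b -> forall eps, 0 < eps -> exists delta, 0 < delta /\
    forall t, a <= t <= b -> Rabs (t - s) < delta -> Rabs (f t - f s) < eps.

(* g : [a,b] -> meridional plane, s |-> (r(s), theta(s)), is a meridional field
   line of B lying in Reg: continuous, and tangent to B_m, i.e.
   dr/ds = B_r, r dtheta/ds = B_theta on (a,b). *)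
Definition field_line (B : R -> R -> vec) (Reg : R -> R -> Prop)
  (g : R -> R * R) (a b : R) : Prop :=
  a <= b /\
  (forall s, a <= s <= b -> Reg (fst (g s)) (snd (g s))) /\
  cont_on (fun s => fst (g s)) a b /\ cont_on (fun s => snd (g s)) a b /\
  (forall s, a < s < b ->
     derivable_pt_lim (fun t => fst (g t)) s (vr (B (fst (g s)) (snd (g s)))) /\
     derivable_pt_lim (fun t => snd (g t)) s
        (vth (B (fst (g s)) (snd (g s))) / fst (g s))).

(* Regions are mirror
   symmetric; velocities are polar vectors (v_r, v_phi even, v_theta odd);
   the magnetic field is an axial vector, up to the global sign sigma allowed
   by the B -> -B symmetry of ideal MHD (sigma = 1: dipole-like parity). *)
Definition eq_sym (sigma : R) (F D S Phot : R -> R -> Prop)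
  (B v Bh vh : R -> R -> vec) (omega Omstar : R -> R -> R) : Prop :=
  (sigma = 1 \/ sigma = -1) /\
  (forall r th, (F r th <-> F r (PI - th)) /\ (D r th <-> D r (PI - th)) /\
                (S r th <-> S r (PI - th)) /\ (Phot r th <-> Phot r (PI - th))) /\
  (forall r th, forall X, (X = B \/ X = Bh) ->
     vr (X r (PI - th)) = - sigma * vr (X r th) /\
     vth (X r (PI - th)) = sigma * vth (X r th) /\
     vph (X r (PI - th)) = - sigma * vph (X r th)) /\
  (forall r th, forall X, (X = v \/ X = vh) ->
     vr (X r (PI - th)) = vr (X r th) /\
     vth (X r (PI - th)) = - vth (X r th) /\
     vph (X r (PI - th)) = vph (X r th)) /\
  (forall r th, omega r (PI - th) = omega r th /\ Omstar r (PI - th) = Omstar r th).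

From Stdlib Require Import Reals Lra.
From Coquelicot Require Import Coquelicot.
Open Scope R_scope.

(* At the shock the tangential electric field is continuous.  On the flow side
   v - omega R e_phi is parallel to B, so v x B = omega R (e_phi x B); on the
   disk side v = v_phi e_phi.  Both t-components are then (minus) the rotation
   speed times B_n, and B_n is continuous and nonzero, so v_phi = omega R at
   Q-hat, where omega is the stellar rate at the footpoint by isorotation in
   the flow.  Inside the disk, with purely azimuthal motion, the
   phi-component of the induction equation combined with div B = 0 gives
   Ferraro's law B_m . grad (v_phi / R) = 0, so v_phi / R is constant along
   the field line, and continuity at the shock fixes the constant. *)

Lemma cross_vadd_vscale_self (k : R) (X Y : vec) :
  cross (vadd (vscale k X) Y) X = cross Y X.
Proof. destruct X, Y; unfold cross, vadd, vscale; cbn; f_equal; ring. Qed.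

Lemma azimuthal_vec (u : vec) : vr u = 0 -> vth u = 0 -> u = vscale (vph u) ephi.
Proof. destruct u; cbn; intros -> ->; unfold vscale, ephi; cbn; f_equal; ring. Qed.

Lemma dot_cross_ephi (W : R) (X n : vec) :
  vph n = 0 -> dot (cross (vscale W ephi) X) (cross n ephi) = - W * dot X n.
Proof. destruct X, n; cbn; intros ->; unfold dot, cross, vscale, ephi; cbn; ring. Qed.

Lemma azimuthal_velocity_from_jump (k W : R) (B Bh vh n : vec) :
  vph n = 0 -> vr vh = 0 -> vth vh = 0 ->
  dot B n = dot Bh n -> dot Bh n <> 0 ->
  dot (cross (vadd (vscale k B) (vscale W ephi)) B) (cross n ephi)
    = dot (cross vh Bh) (cross n ephi) ->
  vph vh = W.
Proof.
  intros Hn Hr Hth HBn Hnz HE.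
  rewrite cross_vadd_vscale_self, (azimuthal_vec vh Hr Hth), !dot_cross_ephi, HBn in HE
    by exact Hn.
  apply Rmult_eq_reg_r with (dot Bh n); [lra | exact Hnz].
Qed.

Lemma Derive_derivable_pt_lim (f : R -> R) (x l : R) :
  derivable_pt_lim f x l -> Derive f x = l.
Proof. intro H; apply is_derive_unique, is_derive_Reals, H. Qed.

Lemma Rcyl_pos (r th : R) : 0 < r -> 0 < th < PI -> 0 < Rcyl r th.
Proof. intros hr hth; apply Rmult_lt_0_compat; [exact hr | apply sin_gt_0; lra]. Qed.

Lemma derivable_pt_lim_partial_r (f : R -> R -> R) (r th lr lth : R) :
  differentiable_pt_lim f r th lr lth -> derivable_pt_lim (fun s => f s th) r lr.
Proof.
  intro H.
  pose proof (derivable_pt_lim_comp_2d f (fun s => s) (fun _ => th) r lr lth 1 0 H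
    (derivable_pt_lim_id r) (derivable_pt_lim_const th r)) as H1.
  now replace lr with (lr * 1 + lth * 0) by ring.
Qed.

Lemma derivable_pt_lim_partial_th (f : R -> R -> R) (r th lr lth : R) :
  differentiable_pt_lim f r th lr lth -> derivable_pt_lim (fun t => f r t) th lth.
Proof.
  intro H.
  pose proof (derivable_pt_lim_comp_2d f (fun _ => r) (fun t => t) th lr lth 0 1 H
    (derivable_pt_lim_const r th) (derivable_pt_lim_id th)) as H1.
  now replace lth with (lr * 0 + lth * 1) by ring.
Qed.

Lemma derivable_pt_lim_Rcyl_path (g : R -> R * R) (c dr dth : R) :
  derivable_pt_lim (fun s => fst (g s)) c dr ->
  derivable_pt_lim (fun s => snd (g s)) c dth ->
  derivable_pt_lim (fun s => Rcyl (fst (g s)) (snd (g s))) c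
    (dr * sin (snd (g c)) + fst (g c) * (cos (snd (g c)) * dth)).
Proof.
  intros Hr Hth.
  apply (derivable_pt_lim_mult (fun s => fst (g s)) (fun s => sin (snd (g s)))); [exact Hr|].
  exact (derivable_pt_lim_comp (fun s => snd (g s)) sin c dth _ Hth
           (derivable_pt_lim_sin (snd (g c)))).
Qed.

Lemma cont_within_at_of_continuity_2d (D : R -> R -> Prop) (f : R -> R -> R) (r th : R) :
  continuity_2d_pt f r th -> cont_within_at D f r th.
Proof.
  intros Hf eps Heps.
  destruct (Hf (mkposreal eps Heps)) as [d Hd].
  exists d; split; [apply cond_pos |].
  intros r' th' _; apply Hd.
Qed.

Lemma continuity_2d_pt_Rcyl (r th : R) : continuity_2d_pt Rcyl r th.
Proof.
  apply continuity_2d_pt_mult; [apply continuity_2d_pt_id1 |].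
  apply (continuity_1d_2d_pt_comp sin (fun _ t => t));
    [apply continuity_sin | apply continuity_2d_pt_id2].
Qed.

Lemma limit1_in_along_path (D : R -> R -> Prop) (f : R -> R -> R) (g : R -> R * R)
    (a b p : R) :
  cont_within_at D f (fst (g p)) (snd (g p)) ->
  cont_on (fun s => fst (g s)) a b -> cont_on (fun s => snd (g s)) a b ->
  a <= p <= b -> (forall s, a < s < b -> D (fst (g s)) (snd (g s))) ->
  limit1_in (fun s => f (fst (g s)) (snd (g s))) (fun s => a < s < b)
    (f (fst (g p)) (snd (g p))) p.
Proof.
  intros Hf Hr Hth Hp Hint eps Heps.
  destruct (Hf eps Heps) as [d [Hd Hfd]].
  destruct (Hr p Hp d Hd) as [dr [Hdr Hrd]].
  destruct (Hth p Hp d Hd) as [dth [Hdth Hthd]].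
  exists (Rmin dr dth); split; [apply Rmin_glb_lt; lra |].
  intros s [Hs Hsp]; cbn in Hsp |- *; unfold Rdist in Hsp |- *.
  assert (Hs' : a <= s <= b) by lra.
  apply Hfd; [exact (Hint s Hs) | apply Hrd | apply Hthd]; try exact Hs';
    eapply Rlt_le_trans; eauto; [apply Rmin_l | apply Rmin_r].
Qed.

Lemma adhDa_open_interval (a b p : R) : a < b -> a <= p <= b -> adhDa (fun s => a < s < b) p.
Proof.
  intros Hab Hp alp Halp.
  destruct (Rle_lt_or_eq_dec p b (proj2 Hp)) as [Hpb | ->].
  - exists (p + Rmin alp (b - p) / 2).
    pose proof (Rmin_l alp (b - p)); pose proof (Rmin_r alp (b - p)).
    assert (0 < Rmin alp (b - p)) by (apply Rmin_glb_lt; lra).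
    unfold Rdist; rewrite Rabs_right; lra.
  - exists (b - Rmin alp (b - a) / 2).
    pose proof (Rmin_l alp (b - a)); pose proof (Rmin_r alp (b - a)).
    assert (0 < Rmin alp (b - a)) by (apply Rmin_glb_lt; lra).
    unfold Rdist; rewrite Rabs_left; lra.
Qed.

Lemma constant_of_null_derivative (f : R -> R) (a b : R) :
  (forall s, a < s < b -> derivable_pt_lim f s 0) ->
  limit1_in f (fun s => a < s < b) (f a) a ->
  limit1_in f (fun s => a < s < b) (f b) b ->
  forall s, a <= s <= b -> f s = f a.
Proof.
  intros Hder Ha Hb s Hs.
  destruct (Rle_lt_or_eq_dec a s (proj1 Hs)) as [Has | <-]; [| reflexivity].
  assert (Hab : a < b) by lra.
  set (K := f ((a + b) / 2)).
  assert (Hconst : forall c, a < c < b -> f c = K).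
  { assert (Hseg : forall c d, a < c -> c < d -> d < b -> f c = f d).
    { intros c d Hc Hcd Hd; apply eq_is_derive; [| exact Hcd].
      intros t Ht; apply is_derive_Reals, Hder; lra. }
    intros c Hc; unfold K.
    destruct (Rtotal_order c ((a + b) / 2)) as [Hlt | [-> | Hgt]].
    - apply Hseg; lra.
    - reflexivity.
    - symmetry; apply Hseg; lra. }
  assert (Hlim : forall p, a <= p <= b -> limit1_in f (fun s => a < s < b) (f p) p -> f p = K).
  { intros p Hp Hfp.
    apply (single_limit f (fun s => a < s < b) _ _ p (adhDa_open_interval a b p Hab Hp) Hfp).
    apply limit1_ext with (fun _ => K); [intros c Hc; symmetry; exact (Hconst c Hc) |].
    apply (limit_free (fun _ => K) _ 0 p). }
  rewrite (Hlim a ltac:(lra) Ha).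
  destruct (Rle_lt_or_eq_dec s b (proj2 Hs)) as [Hsb | ->].
  - apply Hconst; lra.
  - apply Hlim; [lra | exact Hb].
Qed.

Section Disk.

Variables (D S : R -> R -> Prop) (vh Bh : R -> R -> vec).

Hypothesis half_plane : forall r th, D r th \/ S r th -> 0 < r /\ 0 < th < PI.
Hypothesis D_open : open2 D.
Hypothesis D_azimuthal : forall r th, D r th -> vr (vh r th) = 0 /\ vth (vh r th) = 0.
Hypothesis D_smooth : forall r th, D r th ->
  diff2 (fun a b => vr (vh a b)) r th /\ diff2 (fun a b => vth (vh a b)) r th /\
  diff2 (fun a b => vph (vh a b)) r th /\ diff2 (fun a b => vr (Bh a b)) r th /\
  diff2 (fun a b => vth (Bh a b)) r th /\ diff2 (fun a b => vph (Bh a b)) r th.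
Hypothesis D_induction : forall r th, D r th ->
  curl_sph (fun a b => cross (vh a b) (Bh a b)) r th = mkv 0 0 0.
Hypothesis D_divB : forall r th, D r th -> div_sph Bh r th = 0.
Hypothesis S_boundary : forall r th, S r th -> cont_within_at D (fun a b => vph (vh a b)) r th.

Lemma induction_phi_azimuthal (r th : R) : D r th ->
  Derive (fun s => s * (vph (vh s th) * vr (Bh s th))) r
  + Derive (fun t => vph (vh r t) * vth (Bh r t)) th = 0.
Proof.
  intro HD.
  assert (Hr : 0 < r) by apply (half_plane r th (or_introl HD)).
  destruct (D_open r th HD) as [d [Hd Hnear]].
  pose proof (f_equal vph (D_induction r th HD)) as E; unfold curl_sph in E; cbn [vph] in E.
  rewrite (Derive_ext_loc _ (fun s => s * (vph (vh s th) * vr (Bh s th)))) in E.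
  2:{ exists (mkposreal d Hd); intros s Hs.
      assert (Hrel : vr (vh s th) = 0)
        by (apply D_azimuthal, Hnear; [exact Hs | rewrite Rminus_diag, Rabs_R0; exact Hd]).
      unfold cross; cbn; rewrite Hrel; ring. }
  rewrite (Derive_ext_loc (fun t => vr (cross (vh r t) (Bh r t)))
             (fun t => - (vph (vh r t) * vth (Bh r t)))), Derive_opp in E.
  2:{ exists (mkposreal d Hd); intros t Ht.
      assert (Hrel : vth (vh r t) = 0)
        by (apply D_azimuthal, Hnear; [rewrite Rminus_diag, Rabs_R0; exact Hd | exact Ht]).
      unfold cross; cbn; rewrite Hrel; ring. }
  apply Rmult_eq_reg_r with (/ r); [| apply Rinv_neq_0_compat; lra].
  rewrite Rmult_0_l; unfold Rdiv, Rminus in E; rewrite Ropp_involutive in E; exact E.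
Qed.

(* Ferraro's law of isorotation: [R (B_m . grad w) = w (B_m . grad R)] with
   [R = r sin th], i.e. [B_m . grad (w / R) = 0]. *)
Lemma disk_isorotation (r th wr wth : R) : D r th ->
  differentiable_pt_lim (fun a b => vph (vh a b)) r th wr wth ->
  Rcyl r th * (vr (Bh r th) * wr + vth (Bh r th) / r * wth)
  = vph (vh r th) * (vr (Bh r th) * sin th + vth (Bh r th) / r * (r * cos th)).
Proof.
  intros HD Hw.
  destruct (half_plane r th (or_introl HD)) as [Hr Hth].
  assert (Hsin : 0 < sin th) by (apply sin_gt_0; lra).
  destruct (D_smooth r th HD) as [_ [_ [_ [[brr [brth HBr]] [[btr [btth HBt]] _]]]]].
  set (w := vph (vh r th)); set (Br := vr (Bh r th)); set (Bt := vth (Bh r th)).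
  assert (Hcurl : 1 * (w * Br) + r * (wr * Br + w * brr) + (wth * Bt + w * btth) = 0).
  { rewrite <- (induction_phi_azimuthal r th HD).
    f_equal; symmetry; apply Derive_derivable_pt_lim.
    - exact (derivable_pt_lim_mult (fun s => s) (fun s => vph (vh s th) * vr (Bh s th)) r _ _
        (derivable_pt_lim_id r)
        (derivable_pt_lim_mult (fun s => vph (vh s th)) (fun s => vr (Bh s th)) r _ _
          (derivable_pt_lim_partial_r _ _ _ _ _ Hw) (derivable_pt_lim_partial_r _ _ _ _ _ HBr))).
    - exact (derivable_pt_lim_mult (fun t => vph (vh r t)) (fun t => vth (Bh r t)) th _ _
        (derivable_pt_lim_partial_th _ _ _ _ _ Hw) (derivable_pt_lim_partial_th _ _ _ _ _ HBt)). }
  assert (Hdiv : (INR 2 * r ^ 1 * Br + r ^ 2 * brr) / r ^ 2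
                 + (cos th * Bt + sin th * btth) / (r * sin th) = 0).
  { rewrite <- (D_divB r th HD); unfold div_sph.
    f_equal; f_equal; symmetry; apply Derive_derivable_pt_lim.
    - exact (derivable_pt_lim_mult (fun s => s ^ 2) (fun s => vr (Bh s th)) r _ _
        (derivable_pt_lim_pow r 2) (derivable_pt_lim_partial_r _ _ _ _ _ HBr)).
    - exact (derivable_pt_lim_mult sin (fun t => vth (Bh r t)) th _ _
        (derivable_pt_lim_sin th) (derivable_pt_lim_partial_th _ _ _ _ _ HBt)). }
  cbn [INR] in Hdiv.
  unfold Rcyl; apply Rminus_diag_uniq.
  match type of Hcurl with ?C = 0 => match type of Hdiv with ?V = 0 =>
    transitivity (sin th * C - w * (r * sin th) * V); [field; lra |] end end.
  rewrite Hcurl, Hdiv; ring.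
Qed.

Lemma angular_velocity_stationary (g : R -> R * R) (c : R) :
  D (fst (g c)) (snd (g c)) ->
  derivable_pt_lim (fun s => fst (g s)) c (vr (Bh (fst (g c)) (snd (g c)))) ->
  derivable_pt_lim (fun s => snd (g s)) c (vth (Bh (fst (g c)) (snd (g c))) / fst (g c)) ->
  derivable_pt_lim
    (fun s => vph (vh (fst (g s)) (snd (g s))) / Rcyl (fst (g s)) (snd (g s))) c 0.
Proof.
  intros HD Hr Hth.
  destruct (half_plane _ _ (or_introl HD)) as [Hpr Hpth].
  pose proof (Rcyl_pos _ _ Hpr Hpth) as HR.
  destruct (D_smooth _ _ HD) as [_ [_ [[wr [wth Hw]] _]]].
  pose proof (disk_isorotation _ _ _ _ HD Hw) as Hiso.
  pose proof (derivable_pt_lim_div _ _ c _ _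
    (derivable_pt_lim_comp_2d (fun a b => vph (vh a b)) _ _ c _ _ _ _ Hw Hr Hth)
    (derivable_pt_lim_Rcyl_path g c _ _ Hr Hth) ltac:(lra)) as Hq.
  cbv beta in Hq.
  match type of Hq with derivable_pt_lim _ _ (?N / ?Q) =>
    replace 0 with (N / Q); [exact Hq |];
    replace N with 0 by (apply Rminus_diag_eq in Hiso; rewrite <- Hiso; ring) end.
  unfold Rdiv; ring.
Qed.

Lemma angular_velocity_limit_at_boundary (g : R -> R * R) (s0 s1 p : R) :
  field_line Bh (fun r th => D r th \/ S r th) g s0 s1 ->
  (forall s, s0 < s < s1 -> D (fst (g s)) (snd (g s))) ->
  S (fst (g p)) (snd (g p)) -> s0 <= p <= s1 ->
  limit1_in (fun s => vph (vh (fst (g s)) (snd (g s))) / Rcyl (fst (g s)) (snd (g s)))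
    (fun s => s0 < s < s1)
    (vph (vh (fst (g p)) (snd (g p))) / Rcyl (fst (g p)) (snd (g p))) p.
Proof.
  intros [_ [_ [Hr [Hth _]]]] Hint HS Hp.
  destruct (half_plane _ _ (or_intror HS)) as [Hpr Hpth].
  apply limit_mul.
  - exact (limit1_in_along_path D _ g s0 s1 p (S_boundary _ _ HS) Hr Hth Hp Hint).
  - apply limit_inv; [| apply Rgt_not_eq, Rcyl_pos; assumption].
    apply (limit1_in_along_path D Rcyl g s0 s1 p); try assumption.
    apply cont_within_at_of_continuity_2d, continuity_2d_pt_Rcyl.
Qed.

Lemma disk_angular_velocity_constant (g : R -> R * R) (s0 s1 : R) :
  field_line Bh (fun r th => D r th \/ S r th) g s0 s1 ->
  (forall s, s0 < s < s1 -> D (fst (g s)) (snd (g s))) ->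
  S (fst (g s0)) (snd (g s0)) -> S (fst (g s1)) (snd (g s1)) ->
  forall s, s0 <= s <= s1 ->
    vph (vh (fst (g s)) (snd (g s))) / Rcyl (fst (g s)) (snd (g s))
    = vph (vh (fst (g s0)) (snd (g s0))) / Rcyl (fst (g s0)) (snd (g s0)).
Proof.
  intros Hline Hint HS0 HS1.
  pose proof Hline as [Hle [_ [_ [_ Hder]]]].
  apply (constant_of_null_derivative
    (fun s => vph (vh (fst (g s)) (snd (g s))) / Rcyl (fst (g s)) (snd (g s)))).
  - intros c Hc; destruct (Hder c Hc).
    apply angular_velocity_stationary; auto.
  - apply (angular_velocity_limit_at_boundary g s0 s1 s0); auto; lra.
  - apply (angular_velocity_limit_at_boundary g s0 s1 s1); auto; lra.
Qed.

End Disk.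

Theorem theorem1
  (* regions of the meridional half-plane (r, theta): flow region F, disk
     region D, shock surface S, stellar photosphere Phot *)
  (F D S Phot : R -> R -> Prop)
  (* flow-region fields (values at shock points = flow-side values) *)
  (B v : R -> R -> vec) (chi omega : R -> R -> R)
  (* disk-region fields (values at shock points = disk-side values) *)
  (Bh vh : R -> R -> vec)
  (* angular velocity of the star at photospheric points *)
  (Omstar : R -> R -> R)
  (H_half : forall r th, F r th \/ D r th \/ S r th \/ Phot r th ->
            0 < r /\ 0 < th < PI)
  (* flow region: v = chi B + omega r sin(theta) e_phi *)
  (H_flow : forall r th, F r th \/ S r th \/ Phot r th ->
     v r th = vadd (vscale (chi r th) (B r th)) (vscale (omega r th * Rcyl r th) ephi))
  (* omega is constant along each meridional field line of the flow region *)
  (H_iso : forall g a b,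
     field_line B (fun r th => F r th \/ S r th \/ Phot r th) g a b ->
     forall s, a <= s <= b -> omega (fst (g s)) (snd (g s)) = omega (fst (g a)) (snd (g a)))
  (* omega equals the stellar angular velocity at the anchoring point *)
  (H_anchor : forall r th, Phot r th -> omega r th = Omstar r th)
  (* disk region: open, no meridional motion, smooth, steady ideal MHD *)
  (HD_open : open2 D)
  (HD_nomer : forall r th, D r th \/ S r th -> vr (vh r th) = 0 /\ vth (vh r th) = 0)
  (HD_smooth : forall r th, D r th ->
     diff2 (fun a b => vr (vh a b)) r th /\ diff2 (fun a b => vth (vh a b)) r th /\
     diff2 (fun a b => vph (vh a b)) r th /\ diff2 (fun a b => vr (Bh a b)) r th /\
     diff2 (fun a b => vth (Bh a b)) r th /\ diff2 (fun a b => vph (Bh a b)) r th)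
  (HD_induction : forall r th, D r th ->
     curl_sph (fun a b => cross (vh a b) (Bh a b)) r th = mkv 0 0 0)
  (HD_divB : forall r th, D r th -> div_sph Bh r th = 0)
  (* disk-side values on the shock are limits from inside the disk *)
  (HD_bdry : forall r th, S r th ->
     cont_within_at D (fun a b => vr (vh a b)) r th /\
     cont_within_at D (fun a b => vth (vh a b)) r th /\
     cont_within_at D (fun a b => vph (vh a b)) r th /\
     cont_within_at D (fun a b => vr (Bh a b)) r th /\
     cont_within_at D (fun a b => vth (Bh a b)) r th /\
     cont_within_at D (fun a b => vph (Bh a b)) r th)
  (* the point Q on the shock, and the shock surface near Q *)
  (rQ thQ : R) (HQ : S rQ thQ)
  (sigmaS : R -> R * R) (dr dth : R)
  (HsQ : sigmaS 0 = (rQ, thQ))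
  (Hsr : derivable_pt_lim (fun u => fst (sigmaS u)) 0 dr)
  (Hsth : derivable_pt_lim (fun u => snd (sigmaS u)) 0 dth)
  (Hsnz : dr <> 0 \/ dth <> 0)
  (HsS : exists delta, 0 < delta /\
     forall u, Rabs u < delta -> S (fst (sigmaS u)) (snd (sigmaS u)))
  (* unit meridional normal n at Q, pointing from the flow region into the disk *)
  (nr nth : R) (Hn_unit : nr ^ 2 + nth ^ 2 = 1)
  (Hn_perp : nr * dr + nth * (rQ * dth) = 0)
  (Hn_into : exists e0, 0 < e0 /\
     forall e, 0 < e < e0 -> D (rQ + e * nr) (thQ + e * nth / rQ))
  (* jump conditions at Q: Delta[B_n] = 0 and Delta[(v x B).t] = 0,
     with t = n x e_phi *)
  (H_jumpB : dot (B rQ thQ) (mkv nr nth 0) = dot (Bh rQ thQ) (mkv nr nth 0))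
  (H_jumpE : dot (cross (v rQ thQ) (B rQ thQ)) (cross (mkv nr nth 0) ephi)
           = dot (cross (vh rQ thQ) (Bh rQ thQ)) (cross (mkv nr nth 0) ephi))
  (* the disk-side normal field at Q is nonzero *)
  (H_Bn : dot (Bh rQ thQ) (mkv nr nth 0) <> 0)
  (* the field line through Q is anchored at the photospheric point P_star *)
  (rP thP : R) (HP : Phot rP thP)
  (gF : R -> R * R) (a b : R)
  (HgF : field_line B (fun r th => F r th \/ S r th \/ Phot r th) gF a b)
  (HgFa : gF a = (rP, thP)) (HgFb : gF b = (rQ, thQ)) :
  (* angular velocity of the disk at Q-hat equals that of the star at P_star *)
  vph (vh rQ thQ) / Rcyl rQ thQ = Omstar rP thP /\
  (* with equatorial symmetry and the field line continuing across the disk,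
     the angular velocity is the same at all disk points along it *)
  (forall sigma, eq_sym sigma F D S Phot B v Bh vh omega Omstar ->
   forall (g : R -> R * R) (s0 s1 : R),
     field_line Bh (fun r th => D r th \/ S r th) g s0 s1 ->
     g s0 = (rQ, thQ) ->
     S (fst (g s1)) (snd (g s1)) ->
     (forall s, s0 < s < s1 -> D (fst (g s)) (snd (g s))) ->
     forall s, s0 <= s <= s1 ->
       vph (vh (fst (g s)) (snd (g s))) / Rcyl (fst (g s)) (snd (g s)) = Omstar rP thP).
Proof.
  assert (Hom : omega rQ thQ = Omstar rP thP).
  { pose proof HgF as [Hab _].
    pose proof (H_iso gF a b HgF b (conj Hab (Rle_refl b))) as E.
    rewrite HgFa, HgFb in E; cbn in E; rewrite E; apply H_anchor, HP. }
  assert (Hcorot : vph (vh rQ thQ) / Rcyl rQ thQ = Omstar rP thP).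
  { destruct (H_half rQ thQ) as [Hr Hth]; [tauto |].
    destruct (HD_nomer rQ thQ (or_intror HQ)) as [Hvr Hvth].
    rewrite (H_flow rQ thQ (or_intror (or_introl HQ))) in H_jumpE.
    rewrite (azimuthal_velocity_from_jump _ _ _ _ _ (mkv nr nth 0) eq_refl
               Hvr Hvth H_jumpB H_Bn H_jumpE), <- Hom.
    field; apply Rgt_not_eq, Rcyl_pos; assumption. }
  split; [exact Hcorot |].
  intros sigma _ g s0 s1 Hline Hg0 HS1 Hint s Hs.
  rewrite (disk_angular_velocity_constant D S vh Bh
             (fun r th h => H_half r th ltac:(tauto)) HD_open
             (fun r th h => HD_nomer r th (or_introl h)) HD_smooth HD_induction HD_divB
             (fun r th h => proj1 (proj2 (proj2 (HD_bdry r th h))))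
             g s0 s1 Hline Hint), Hg0.
  - exact Hcorot.
  - rewrite Hg0; exact HQ.
  - exact HS1.
  - exact Hs.
Qed.
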